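(* Let $c\ge1$ and let $\Gamma$ be a $c$-uniform unoriented hypergraph with $N$ vertices, $M\ge1$ edges and no isolated vertices, with average degree $\overline{\deg}$, smallest edge Laplacian eigenvalue $\mu_1<c/\overline{\deg}$, and strong edge coloring number $\chi'$, and suppose $\chi'=\dfrac{c-\mu_1}{c/\overline{\deg}-\mu_1}$. (1) If $\mu_1=0$, then $\Gamma$ is $k$-regular for some $k$ (namely $k=\overline{\deg}$), $\chi'=k$, and $0$ is an eigenvalue of $L^1$ with multiplicity at least $k-1$. (2) If $\mu_1>0$, then $\mu_1$ is an eigenvalue of $L^1$ with multiplicity at least $\chi'-1$, and also an eigenvalue of the normalized Laplacian $L$ with multiplicity at least $\chi'-1$.
   Context: A hypergraph has finite vertex set $V$ and edge set $E\subseteq\mathcal P(V)$; it is $c$-uniform if $|e|=c$ for all $e$, and unoriented means all incidences have orientation $+1$, so the incidence matrix $\mathcal I$ ($N\times M$) has $\mathcal I_{v,e}=1$ if $v\in e$ and $0$ otherwise. $\deg v=|\{e: v\in e\}|\ge1$, $D=\mathrm{diag}(\deg v)$, $\overline{\deg}=\frac1N\sum_v\deg v$; $\Gamma$ is $k$-regular if every vertex has degree $k$. The normalized Laplacian is $L=D^{-1}\mathcal I\mathcal I^\top$ ($N\times N$) and the edge Laplacian is $L^1=\mathcal I^\top D^{-1}\mathcal I$ ($M\times M$), with eigenvalues $0\le\mu_1\le\dots\le\mu_M$. A proper strong $k$-edge-coloring is a map $c'\colon E\to\{1,\dots,k\}$ such that distinct edges of the same color are disjoint; $\chi'$ is the least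 such $k$. *)

From HB Require Import structures.
From mathcomp Require Import all_boot all_order all_algebra.
Set Implicit Arguments. Unset Strict Implicit. Unset Printing Implicit Defensive.
Import Order.TTheory GRing.Theory Num.Theory.
Local Open Scope ring_scope.

Section Hypergraph.
Variable V : finType.
Variable E : {set {set V}}.

Definition uniform (c : nat) : Prop := forall e, e \in E -> #|e| = c.

Definition hdeg (v : V) : nat := #|[set e in E | v \in e]|.

Definition no_isolated : Prop := forall v, (0 < hdeg v)%N.

Definition avg_deg (R : numFieldType) : R :=
  (\sum_(v : V) hdeg v)%:R / #|V|%:R.

Definition incidence (R : numFieldType) : 'M[R]_(#|V|, #|E|) :=
  \matrix_(i < #|V|, j < #|E|)
    ((enum_val i \in (enum_val j : {set V})) : nat)%:R.

Definition Dinv (R : numFieldType) : 'M[R]_(#|V|) :=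
  \matrix_(i, j) ((i == j)%:R / (hdeg (enum_val i))%:R).

Definition norm_laplacian (R : numFieldType) : 'M[R]_(#|V|) :=
  Dinv R *m incidence R *m (incidence R)^T.

Definition edge_laplacian (R : numFieldType) : 'M[R]_(#|E|) :=
  (incidence R)^T *m Dinv R *m incidence R.

Definition strong_edge_colorable (k : nat) : Prop :=
  exists col : {set V} -> 'I_k,
    forall e f, e \in E -> f \in E -> e != f -> col e = col f -> [disjoint e & f].

Definition is_strong_chromatic_index (chi : nat) : Prop :=
  strong_edge_colorable chi /\ forall k, strong_edge_colorable k -> (chi <= k)%N.

(* geometric multiplicity of a as eigenvalue of a square matrix *)
Definition eigmult (R : fieldType) n (A : 'M[R]_n) (a : R) : nat :=
  \rank (eigenspace A a).

Definition smallest_eigenvalue (R : numFieldType) n (A : 'M[R]_n) (mu : R) : Prop :=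
  eigenvalue A mu /\ forall a, eigenvalue A a -> mu <= a.

End Hypergraph.

(* The edge Laplacian L^1 = I^T D^-1 I is symmetric with smallest eigenvalue mu,
   so L^1 - mu is positive semidefinite; the all-ones vector is an eigenvector
   for the eigenvalue c.  Let x_a be the indicator of the a-th colour class of a
   strong colouring with chi colours and s_a its size.  Since a vertex lies in
   at most one edge of each colour, sum_a x_a L^1 x_a^T = N.  With lam = c - mu,
   the form of L^1 - mu at the projection of x_a orthogonal to the all-ones
   vector, plus lam/M (s_a - M/chi)^2, sums over a to N - mu M - lam M/chi,
   which vanishes exactly under the hypothesis on chi.  Hence all colour
   classes have M/chi edges and every x_a - 1/chi is a mu-eigenvector of L^1;
   these chi vectors sum to zero and any chi - 1 of them are independent.
   Right multiplication by I^T carries them to eigenvectors of L = D^-1 I I^T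
   when mu <> 0.  When mu = 0 the hypothesis reads chi = avg deg, while a strong
   colouring bounds every degree by chi, which forces regularity. *)

From HB Require Import structures.
From mathcomp Require Import all_boot all_order all_algebra.
From mathcomp Require Import ring.
From mathcomp Require Import complex.
Set Implicit Arguments. Unset Strict Implicit. Unset Printing Implicit Defensive.
Import Order.TTheory GRing.Theory Num.Theory.
Local Open Scope ring_scope.

Definition qform (R : pzRingType) n (A : 'M[R]_n) (x : 'rV[R]_n) : R :=
  (x *m A *m x^T) 0 0.

(* The spectral theorem of MathComp is stated over a numClosedFieldType, so a
   real symmetric matrix is diagonalised by a unitary matrix over R[i]. *)
Section PositiveSemidefinite.
Local Open Scope sesquilinear_scope.
Variable R : rcfType.
Local Notation f := (real_complex R).

Lemma eigenvalue_map_real_complex n (A : 'M[R]_n) (a : R) :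
  eigenvalue (map_mx f A) (f a) = eigenvalue A a.
Proof. by rewrite !eigenvalue_root_char -map_char_poly fmorph_root. Qed.

Variables (n : nat) (A : 'M[R]_n).
Hypotheses (A_sym : A^T = A) (A_eig_ge0 : forall a, eigenvalue A a -> 0 <= a).
Let Ac := map_mx f A.
Let P := spectralmx Ac.
Let d := spectral_diag Ac.

Let Ac_real : Ac \is a realmx.
Proof. by apply/mxOverP => i j; rewrite mxE /= complex_real. Qed.

Let Ac_sym : Ac \is symmetricmx.
Proof.
by apply/is_hermitianmxP; rewrite expr0 scale1r map_mx_id // /Ac map_trmx A_sym.
Qed.

Let AcE : Ac = P^t* *m diag_mx d *m P.
Proof.
rewrite -invmx_unitary ?spectral_unitarymx //.
exact/orthomx_spectralP/symmetric_normalmx.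
Qed.

Lemma spectral_diag_ge0 j : 0 <= d 0 j.
Proof.
have d_real : d 0 j \is Num.real.
  by have /mxOverP := hermitian_spectral_diag_real (realsym_hermsym Ac_sym Ac_real).
have eig_d : eigenvalue Ac (d 0 j).
  apply/eigenvalueP; exists (row j P).
    rewrite -row_mul {1}AcE !mulmxA -invmx_unitary ?spectral_unitarymx //.
    by rewrite mulmxV ?spectral_unit // mul1mx row_mul row_diag_mx -scalemxAl -rowE.
  apply/eqP => Pj0.
  have /rowP/(_ j) : row j (P *m invmx P) = 0 by rewrite row_mul Pj0 mul0mx.
  by rewrite mulmxV ?spectral_unit // !mxE eqxx; apply/eqP; rewrite oner_eq0.
have dE : d 0 j = f (complex.Re (d 0 j)) by rewrite RRe_real.
move: eig_d; rewrite dE eigenvalue_map_real_complex => /A_eig_ge0.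
by rewrite ler0c.
Qed.

Lemma qform_spectral (x : 'rV[R]_n) :
  f (qform A x) = \sum_j d 0 j * `|(map_mx f x *m P^t*) 0 j| ^+ 2.
Proof.
set u := map_mx f x.
have uE : map_mx f x^T = u^t*.
  by apply/matrixP => i j; rewrite !mxE conj_Creal ?complex_real.
have -> : f (qform A x) = (u *m Ac *m u^t*) 0 0 by rewrite -uE -!map_mxM [RHS]mxE.
have -> : u *m Ac *m u^t* = (u *m P^t*) *m diag_mx d *m (u *m P^t*)^t*.
  by rewrite AcE trmx_mul map_mxM trmxCK !mulmxA.
rewrite mxE; apply: eq_bigr => j _.
by rewrite mul_mx_diag !mxE normCK mulrCA mulrA.
Qed.

Lemma qform_psd_ge0 x : 0 <= qform A x.
Proof.
suff : 0 <= f (qform A x) by rewrite /= ler0c.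
rewrite qform_spectral; apply: sumr_ge0 => j _.
exact/mulr_ge0/exprn_ge0/normr_ge0/spectral_diag_ge0.
Qed.

Lemma qform_psd_eq0 x : qform A x = 0 -> x *m A = 0.
Proof.
move=> q0; have /eqP := qform_spectral x.
rewrite q0 rmorph0 eq_sym psumr_eq0 => [/allP w0|j _];
  last exact/mulr_ge0/exprn_ge0/normr_ge0/spectral_diag_ge0.
set w := map_mx f x *m P^t* in w0 *.
have wd0 : w *m diag_mx d = 0.
  apply/rowP => j; rewrite mul_mx_diag [LHS]mxE [RHS]mxE.
  have /implyP/(_ isT) := w0 j (mem_index_enum j).
  by rewrite mulf_eq0 sqrf_eq0 normr_eq0 => /orP[] /eqP ->; rewrite ?mulr0 ?mul0r.
apply/eqP; rewrite -(map_mx_eq0 f) map_mxM -/Ac AcE !mulmxA -/w wd0.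
by rewrite mul0mx.
Qed.
End PositiveSemidefinite.

Lemma eigenvalue_subr_scalar (F : fieldType) n (A : 'M[F]_n) (mu a : F) :
  eigenvalue (A - mu%:M) a = eigenvalue A (mu + a).
Proof. by rewrite /eigenvalue /eigenspace raddfD opprD addrA. Qed.

Lemma qform_sub_eigenvector (R : comPzRingType) n (A : 'M[R]_n) (w y : 'rV[R]_n)
    (lam t : R) :
  A^T = A -> w *m A = lam *: w ->
  qform A (y - t *: w) =
    qform A y - 2 * t * lam * (y *m w^T) 0 0 + t ^+ 2 * lam * (w *m w^T) 0 0.
Proof.
move=> A_sym wA.
have wy : (w *m y^T) 0 0 = (y *m w^T) 0 0.
  by rewrite -[w *m _]trmxK trmx_mul trmxK mxE.
have yAw : (y *m A *m w^T) 0 0 = lam * (y *m w^T) 0 0.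
  rewrite -[y *m A *m _]trmxK mxE !trmx_mul !trmxK A_sym mulmxA wA.
  by rewrite -scalemxAl mxE wy.
rewrite /qform.
have -> : (y - t *: w)^T = y^T - t *: w^T by apply/matrixP => i j; rewrite !mxE.
rewrite !mulmxBl !mulmxBr -!scalemxAr -!scalemxAl wA -!scalemxAl.
rewrite -!trace_mx11 !linearB /= !linearZ /= !trace_mx11 yAw wy; ring.
Qed.

Lemma row_free_shifted_indicators (F : fieldType) m k (col : 'I_m -> 'I_k) (t : F) :
  t != 0 -> (forall a, exists j, col j = a) ->
  row_free (\matrix_(r < k.-1, j < m) ((col j == widen_ord (leq_pred k) r)%:R - t)).
Proof.
set wid := widen_ord _; set Y := \matrix_(r, j) _ => t0 col_onto.
apply: inj_row_free => v vY0; set S := \sum_r v 0 r.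
have vYE j : (v *m Y) 0 j = \sum_r v 0 r * (col j == wid r)%:R - t * S.
  rewrite mxE /S mulr_sumr -sumrB; apply: eq_bigr => r _.
  by rewrite mxE mulrBr [t * _]mulrC.
apply/rowP => r0; rewrite mxE.
have last_lt : (k.-1 < k)%N.
  by rewrite ltn_predL (leq_ltn_trans (leq0n r0) (leq_trans (ltn_ord r0) (leq_pred k))).
have S0 : S = 0.
  (* no row of Y belongs to the last colour *)
  have [j colj] := col_onto (Ordinal last_lt).
  have := vYE j; rewrite vY0 mxE big1 => [|r _]; last first.
    by rewrite colj -val_eqE /= gtn_eqF ?mulr0.
  by move/esym/eqP; rewrite sub0r oppr_eq0 mulf_eq0 (negbTE t0) => /eqP.
have [j colj] := col_onto (wid r0).
have := vYE j; rewrite vY0 mxE S0 mulr0 subr0 (bigD1 r0) //= colj eqxx mulr1.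
by rewrite big1 ?addr0 // => r /negbTE rr0; rewrite -val_eqE /= val_eqE eq_sym rr0 mulr0.
Qed.

Lemma eigmult_mulmxC (F : fieldType) m n (P : 'M[F]_(m, n)) (Q : 'M[F]_(n, m)) (a : F) :
  a != 0 -> (eigmult (Q *m P) a <= eigmult (P *m Q) a)%N.
Proof.
move=> a0; set Y := eigenspace (Q *m P) a.
have YQP : Y *m Q *m P = a *: Y by rewrite -mulmxA; apply/eigenspaceP.
have -> : eigmult (Q *m P) a = \rank (Y *m Q *m P) by rewrite YQP (eqmx_scale _ a0).
apply: leq_trans (mxrankM_maxl _ _) _; apply: mxrankS; apply/eigenspaceP.
by rewrite mulmxA YQP scalemxAl.
Qed.

Lemma natr_card (R : pzRingType) (T : finType) (P : {pred T}) :
  (#|P|%:R : R) = \sum_t (t \in P)%:R.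
Proof.
rewrite -sum1_card natr_sum big_mkcond /=; apply: eq_bigr => t _.
by rewrite unfold_in; case: (P t).
Qed.

Section Hypergraph.
Variables (R : rcfType) (V : finType) (E : {set {set V}}).
Local Notation n := #|V|.
Local Notation m := #|E|.
Local Notation Inc := (incidence E R).
Local Notation L1 := (edge_laplacian E R).
Local Notation edge j := (enum_val j : {set V}).
Local Notation deg i := (hdeg E (enum_val i)).
Local Notation ones := (const_mx 1 : 'rV[R]_m).

Lemma hdegE v : hdeg E v = (\sum_(j < m) (v \in edge j))%N.
Proof.
rewrite /hdeg -sum1_card -(big_enum_val (fun e : {set V} => (v \in e) : nat)) /=.
rewrite big_mkcond [RHS]big_mkcond /=; apply: eq_bigr => e _.
by rewrite inE; case: (e \in E); case: (v \in e).
Qed.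

Lemma incidence_rowsum i : \sum_j Inc i j = (deg i)%:R.
Proof. by rewrite hdegE natr_sum; apply: eq_bigr => j _; rewrite mxE. Qed.

Lemma incidence_colsum j : \sum_i Inc i j = #|edge j|%:R.
Proof.
have -> : #|edge j| = (\sum_(v : V) (v \in edge j))%N.
  by rewrite -sum1_card big_mkcond; apply: eq_bigr => v _; case: (_ \in _).
rewrite natr_sum (big_enum_val (A := V)) /=.
by apply: eq_bigr => i _; rewrite mxE.
Qed.

Lemma sum_hdeg : (\sum_v hdeg E v = \sum_(j < m) #|edge j|)%N.
Proof.
under eq_bigr do rewrite hdegE.
rewrite exchange_big /=; apply: eq_bigr => j _.
by rewrite -sum1_card [RHS]big_mkcond; apply: eq_bigr => v _; case: (_ \in _).
Qed.

Lemma DinvE : Dinv E R = diag_mx (\row_i (deg i)%:R^-1).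
Proof.
apply/matrixP => i j; rewrite !mxE.
by case: eqVneq => [->|_]; rewrite ?mulr1n ?mul1r ?mulr0n ?mul0r.
Qed.

Lemma edge_laplacian_sym : L1^T = L1.
Proof. by rewrite /edge_laplacian !trmx_mul trmxK DinvE tr_diag_mx mulmxA. Qed.

Lemma qform_edge_laplacian x :
  qform L1 x = \sum_i ((x *m Inc^T) 0 i) ^+ 2 / (deg i)%:R.
Proof.
have -> : qform L1 x = qform (diag_mx (\row_i (deg i)%:R^-1)) (x *m Inc^T).
  by rewrite /qform /edge_laplacian DinvE trmx_mul trmxK !mulmxA.
rewrite /qform mxE; apply: eq_bigr => i _.
by rewrite mul_mx_diag !mxE mulrAC expr2.
Qed.

Lemma edge_laplacian_const c :
  uniform E c -> no_isolated E -> ones *m L1 = c%:R *: ones.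
Proof.
move=> unif noiso.
have onesInc i : (ones *m Inc^T) 0 i = (deg i)%:R.
  by rewrite mxE -incidence_rowsum; apply: eq_bigr => j _; rewrite !mxE mul1r.
have onesD : ones *m Inc^T *m Dinv E R = const_mx 1.
  apply/rowP => i; rewrite DinvE mul_mx_diag [LHS]mxE onesInc !mxE.
  by rewrite mulfV // pnatr_eq0 -lt0n.
rewrite /edge_laplacian !mulmxA onesD; apply/rowP => j; rewrite !mxE.
under eq_bigr do rewrite mxE mul1r.
by rewrite mulr1 incidence_colsum unif ?enum_valP.
Qed.

Lemma sum_hdeg_uniform c : uniform E c -> (\sum_v hdeg E v = c * m)%N.
Proof.
move=> unif; rewrite sum_hdeg (eq_bigr (fun _ => c)) => [|j _]; last first.
  by rewrite unif ?enum_valP.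
by rewrite big_const_ord iter_addn_0 mulnC.
Qed.

Lemma card_le_uniform c : uniform E c -> no_isolated E -> (n <= c * m)%N.
Proof.
move=> unif noiso; rewrite -(sum_hdeg_uniform unif) -sum1_card.
by apply: leq_sum => v _; apply: noiso.
Qed.

Lemma avg_deg_uniform_ratio c : (0 < c)%N -> uniform E c -> (0 < m)%N ->
  c%:R / avg_deg E R = n%:R / m%:R.
Proof.
move=> c_gt0 unif m_gt0.
have n_gt0 : (0 < n)%N.
  have /card_gt0P[v _] : (0 < #|edge (Ordinal m_gt0)|)%N by rewrite unif ?enum_valP.
  by apply/card_gt0P; exists v.
rewrite /avg_deg (sum_hdeg_uniform unif) natrM; field.
by rewrite !pnatr_eq0 -!lt0n c_gt0 m_gt0 n_gt0.
Qed.

Lemma hdeg_const_of_avg_deg k :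
  (forall v, hdeg E v <= k)%N -> avg_deg E R = k%:R -> forall v, hdeg E v = k.
Proof.
move=> le_k avg_k v.
have n_neq0 : n%:R != 0 :> R by rewrite pnatr_eq0 -lt0n; apply/card_gt0P; exists v.
have sum0 : \sum_u ((k%:R : R) - (hdeg E u)%:R) = 0.
  rewrite sumrB sumr_const -natr_sum.
  move: avg_k; rewrite /avg_deg => /(congr1 ( *%R^~ n%:R)); rewrite divfK // => ->.
  by rewrite mulr_natr subrr.
apply/eqP; rewrite -(eqr_nat R) eq_sym -subr_eq0; apply/eqP.
by apply: (psumr_eq0P _ sum0) => // u _; rewrite subr_ge0 ler_nat.
Qed.

Section StrongColoring.
Variables (k : nat) (col : {set V} -> 'I_k).
Hypothesis col_strong : forall e f, e \in E -> f \in E -> e != f -> col e = col f ->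
  [disjoint e & f].

Lemma hdeg_le_colors v : (hdeg E v <= k)%N.
Proof.
rewrite /hdeg -[X in (_ <= X)%N]card_ord; apply: (leq_card_in col) => e1 e2.
rewrite !inE => /andP[e1E v1] /andP[e2E v2] c12; apply/eqP/negPn/negP => e12.
by rewrite (disjointFr (col_strong e1E e2E e12 c12) v1) in v2.
Qed.

Definition color_class a : 'rV[R]_m := \row_j (col (edge j) == a)%:R.

Definition color_size a : R := \sum_j color_class a 0 j.

Lemma color_class_incidence a i : (color_class a *m Inc^T) 0 i =
  #|[pred j : 'I_m | (col (edge j) == a) && (enum_val i \in edge j)]|%:R.
Proof.
rewrite mxE natr_card; apply: eq_bigr => j _.
by rewrite !mxE inE; case: (_ == a); rewrite ?mul1r ?mul0r.
Qed.

Lemma color_class_incidence_sqr a i :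
  ((color_class a *m Inc^T) 0 i) ^+ 2 = (color_class a *m Inc^T) 0 i.
Proof.
have nat_sqr (N : nat) : (N <= 1)%N -> (N%:R : R) ^+ 2 = N%:R.
  by case: N => [|[|]] // _; rewrite ?expr0n ?expr1n.
rewrite color_class_incidence; apply: nat_sqr.
apply/card_le1_eqP => j1 j2; rewrite !inE => /andP[/eqP c1 v1] /andP[/eqP c2 v2].
apply/eqP/negPn/negP => j12.
have e12 : edge j1 != edge j2 by apply: contra j12 => /eqP/enum_val_inj ->.
have e12_disj := col_strong (enum_valP j1) (enum_valP j2) e12 (etrans c1 (esym c2)).
by rewrite (disjointFr e12_disj v1) in v2.
Qed.

Lemma sum_color_class_incidence i : \sum_a (color_class a *m Inc^T) 0 i = (deg i)%:R.
Proof.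
rewrite -incidence_rowsum; under eq_bigr do rewrite mxE.
rewrite exchange_big /=; apply: eq_bigr => j _.
rewrite -mulr_suml mxE -[RHS]mul1r; congr (_ * _).
rewrite (bigD1 (col (edge j))) //= big1 ?addr0 => [|a]; rewrite mxE ?eqxx //.
by rewrite eq_sym => /negbTE ->.
Qed.

Lemma sum_qform_color_class :
  no_isolated E -> \sum_a qform L1 (color_class a) = n%:R.
Proof.
move=> noiso; under eq_bigr do rewrite qform_edge_laplacian.
rewrite exchange_big /= -[X in _ = X%:R]card_ord natr_card; apply: eq_bigr => i _.
under eq_bigr do rewrite color_class_incidence_sqr.
by rewrite -mulr_suml sum_color_class_incidence mulfV // pnatr_eq0 -lt0n.
Qed.

Lemma sum_color_size : \sum_a color_size a = m%:R.
Proof.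
rewrite /color_size exchange_big /= -[X in _ = X%:R]card_ord natr_card.
apply: eq_bigr => j _.
rewrite (bigD1 (col (edge j))) //= big1 ?addr0 => [|a]; rewrite mxE ?eqxx //.
by rewrite eq_sym => /negbTE ->.
Qed.

Lemma color_class_dot_self a : (color_class a *m (color_class a)^T) 0 0 = color_size a.
Proof.
rewrite mxE; apply: eq_bigr => j _; rewrite !mxE.
by case: (_ == _); rewrite ?mulr1 ?mulr0.
Qed.

Lemma color_class_dot_ones a : (color_class a *m ones^T) 0 0 = color_size a.
Proof. by rewrite mxE; apply: eq_bigr => j _; rewrite !mxE mulr1. Qed.

End StrongColoring.

Section TightColoring.
Variables (c chi : nat) (mu : R) (col : {set V} -> 'I_chi).
Hypotheses (c_gt0 : (0 < c)%N) (unif : uniform E c) (m_gt0 : (0 < m)%N)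
  (noiso : no_isolated E).
Hypothesis col_strong : forall e f, e \in E -> f \in E -> e != f -> col e = col f ->
  [disjoint e & f].
Hypothesis mu_min : forall a, eigenvalue L1 a -> mu <= a.
Hypothesis mu_lt : mu < c%:R / avg_deg E R.
Hypothesis chi_tight : chi%:R = (c%:R - mu) / (c%:R / avg_deg E R - mu).

Local Notation x := (color_class col).
Local Notation s := (color_size col).
Let lam := c%:R - mu.
Let A := L1 - mu%:M.

Let A_sym : A^T = A.
Proof. by rewrite /A linearB /= edge_laplacian_sym tr_scalar_mx. Qed.

Let A_eig_ge0 b : eigenvalue A b -> 0 <= b.
Proof. by rewrite eigenvalue_subr_scalar => /mu_min; rewrite lerDl. Qed.

Let m_neq0 : m%:R != 0 :> R. Proof. by rewrite pnatr_eq0 -lt0n. Qed.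

Let chi_neq0 : chi%:R != 0 :> R.
Proof.
by rewrite pnatr_eq0 -lt0n (leq_ltn_trans _ (ltn_ord (col (edge (Ordinal m_gt0))))).
Qed.

Let mu_lt_ratio : mu < n%:R / m%:R.
Proof. by rewrite -(avg_deg_uniform_ratio c_gt0 unif m_gt0). Qed.

Let lam_gt0 : 0 < lam.
Proof.
rewrite subr_gt0 (lt_le_trans mu_lt_ratio) // ler_pdivrMr ?ltr0n // -natrM ler_nat.
exact: card_le_uniform.
Qed.

Let chi_lam : chi%:R * (n%:R / m%:R - mu) = lam.
Proof.
by rewrite chi_tight -(avg_deg_uniform_ratio c_gt0 unif m_gt0) divfK // subr_eq0 gt_eqF.
Qed.

Lemma qform_color_class_centered a :
  qform A (x a - (s a / m%:R) *: ones) + lam / m%:R * (s a - m%:R / chi%:R) ^+ 2 =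
  qform L1 (x a) - (mu + 2 * lam / chi%:R) * s a + lam * m%:R / chi%:R ^+ 2.
Proof.
have onesA : ones *m A = lam *: ones.
  by rewrite mulmxBr (edge_laplacian_const unif noiso) mul_mx_scalar scalerBl.
have ones_dot : (ones *m ones^T) 0 0 = m%:R.
  rewrite mxE -[X in _ = X%:R]card_ord natr_card.
  by apply: eq_bigr => j _; rewrite !mxE mulr1.
have qA : qform A (x a) = qform L1 (x a) - mu * s a.
  rewrite /qform /A mulmxBr mul_mx_scalar mulmxBl -scalemxAl.
  by rewrite -!trace_mx11 linearB linearZ /= !trace_mx11 color_class_dot_self.
rewrite (qform_sub_eigenvector _ _ A_sym onesA) qA color_class_dot_ones ones_dot.
by field; rewrite chi_neq0 m_neq0.
Qed.

Lemma sum_qform_color_class_centered :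
  \sum_a (qform A (x a - (s a / m%:R) *: ones) + lam / m%:R * (s a - m%:R / chi%:R) ^+ 2)
  = 0.
Proof.
rewrite (eq_bigr _ (fun a _ => qform_color_class_centered a)) big_split sumrB /=.
rewrite (sum_qform_color_class col_strong noiso) -mulr_sumr sum_color_size.
rewrite sumr_const card_ord -mulr_natr -chi_lam.
by field; rewrite chi_neq0 m_neq0.
Qed.

Lemma color_class_balanced a :
  qform A (x a - (s a / m%:R) *: ones) = 0 /\ s a = m%:R / chi%:R.
Proof.
have q_ge0 b : 0 <= qform A (x b - (s b / m%:R) *: ones) by apply: qform_psd_ge0.
have sq_ge0 b : 0 <= lam / m%:R * (s b - m%:R / chi%:R) ^+ 2.
  by rewrite mulr_ge0 ?sqr_ge0 // divr_ge0 ?ler0n ?ltW.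
have /eqP := psumr_eq0P (fun b _ => addr_ge0 (q_ge0 b) (sq_ge0 b))
  sum_qform_color_class_centered (i := a) isT.
rewrite paddr_eq0 // => /andP[/eqP q0 sq0]; split => //; move: sq0.
rewrite mulf_eq0 sqrf_eq0 mulf_eq0 invr_eq0 (negbTE m_neq0) (gt_eqF lam_gt0) subr_eq0.
by move=> /eqP.
Qed.

Lemma color_class_eigenvector a :
  (x a - chi%:R^-1 *: ones) *m L1 = mu *: (x a - chi%:R^-1 *: ones).
Proof.
have [q0 sa] := color_class_balanced a.
have := qform_psd_eq0 A_sym A_eig_ge0 q0.
have -> : s a / m%:R = chi%:R^-1 by rewrite sa; field; rewrite chi_neq0 m_neq0.
by rewrite /A mulmxBr mul_mx_scalar => /eqP; rewrite subr_eq0 => /eqP.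
Qed.

Lemma eigmult_edge_laplacian_tight : (chi.-1 <= eigmult L1 mu)%N.
Proof.
pose wid := widen_ord (leq_pred chi).
pose Y : 'M[R]_(chi.-1, m) := \matrix_(r, j) ((col (edge j) == wid r)%:R - chi%:R^-1).
have col_onto b : exists j : 'I_m, col (edge j) = b.
  have [j /eqP colj|none] := pickP (fun j : 'I_m => col (edge j) == b); first by exists j.
  have : s b = 0 by apply: big1 => j _; rewrite mxE none.
  rewrite (color_class_balanced b).2 => /eqP.
  by rewrite mulf_eq0 invr_eq0 (negbTE chi_neq0) (negbTE m_neq0).
have Y_free : row_free Y := row_free_shifted_indicators (invr_neq0 chi_neq0) col_onto.
rewrite /eigmult -(eqP Y_free); apply/mxrankS/eigenspaceP/row_matrixP => r.
have rowY : row r Y = x (wid r) - chi%:R^-1 *: ones by apply/rowP => j; rewrite !mxE mulr1.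
by rewrite row_mul linearZ /= rowY color_class_eigenvector.
Qed.

End TightColoring.
End Hypergraph.

Theorem mainTheorem16 (R : rcfType) (V : finType) (E : {set {set V}})
    (c : nat) (mu1 : R) (chi : nat) :
  (1 <= c)%N ->
  uniform E c ->
  (1 <= #|E|)%N ->
  no_isolated E ->
  smallest_eigenvalue (edge_laplacian E R) mu1 ->
  mu1 < c%:R / avg_deg E R ->
  is_strong_chromatic_index E chi ->
  chi%:R = (c%:R - mu1) / (c%:R / avg_deg E R - mu1) ->
  (mu1 = 0 ->
     exists k : nat,
       (forall v, hdeg E v = k) /\ k%:R = avg_deg E R /\ chi = k /\
       (k - 1 <= eigmult (edge_laplacian E R) 0)%N) /\
  (0 < mu1 ->
     (chi - 1 <= eigmult (edge_laplacian E R) mu1)%N /\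
     (chi - 1 <= eigmult (norm_laplacian E R) mu1)%N).
Proof.
move=> c_gt0 unif m_gt0 noiso [_ mu_min] mu_lt [[col col_strong] _] chi_tight.
have eig_L1 : (chi - 1 <= eigmult (edge_laplacian E R) mu1)%N.
  rewrite subn1; exact: (eigmult_edge_laplacian_tight c_gt0 unif m_gt0 noiso col_strong
    mu_min mu_lt chi_tight).
split=> [mu0 | mu_gt0]; last first.
  split=> //; apply: leq_trans eig_L1 _.
  by rewrite /edge_laplacian /norm_laplacian -mulmxA eigmult_mulmxC ?gt_eqF.
have avg_neq0 : avg_deg E R != 0.
  by apply: contraTneq mu_lt => ->; rewrite invr0 mulr0 mu0 ltxx.
have chi_avg : chi%:R = avg_deg E R.
  by rewrite chi_tight mu0 !subr0; field; rewrite avg_neq0 pnatr_eq0 -lt0n.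
exists chi; split.
  exact: hdeg_const_of_avg_deg (hdeg_le_colors col_strong) (esym chi_avg).
by rewrite -mu0.
Qed.
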